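(* Let $X$ be an infinite zero-dimensional compact Hausdorff space. Then $X$ is h-homogeneous if and only if $X$ is partition-homogeneous.
   Context: $X$ is h-homogeneous if every nonempty clopen subset of $X$ is homeomorphic to $X$. $X$ is partition-homogeneous if for any two finite ordered partitions of $X$ into the same number $m$ of (nonempty) clopen sets, $(A_1,\dots,A_m)$ and $(B_1,\dots,B_m)$, there is a homeomorphism $h$ of $X$ with $hA_i=B_i$ for $i=1,\dots,m$. *)

From HB Require Import structures.
From mathcomp Require Import all_boot all_order all_algebra.
From mathcomp Require Import all_classical all_reals all_analysis.
Set Implicit Arguments. Unset Strict Implicit. Unset Printing Implicit Defensive.
Local Open Scope classical_set_scope.

Definition zero_dim_space (X : topologicalType) : Prop :=
  forall (U : set X) (x : X), open U -> U x ->
    exists V : set X, [/\ clopen V, V x & V `<=` U].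

Definition homeomorphic_sets (X Y : topologicalType) (A : set X) (B : set Y) : Prop :=
  exists (f : X -> Y) (g : Y -> X),
    [/\ {within A, continuous f} /\ {within B, continuous g},
        f @` A `<=` B, g @` B `<=` A,
        (forall a, A a -> g (f a) = a) & (forall b, B b -> f (g b) = b)].

Definition self_homeomorphism (X : topologicalType) (h : X -> X) : Prop :=
  exists k : X -> X, [/\ continuous h, continuous k, cancel h k & cancel k h].

Definition h_homogeneous (X : topologicalType) : Prop :=
  forall A : set X, clopen A -> A !=set0 -> homeomorphic_sets A [set: X].

Definition clopen_partition (X : topologicalType) (m : nat) (A : 'I_m -> set X) : Prop :=
  [/\ (forall i, clopen (A i)), (forall i, A i !=set0),
      (forall i j, i != j -> A i `&` A j = set0) &
      \bigcup_i A i = [set: X]].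

Definition partition_homogeneous (X : topologicalType) : Prop :=
  forall (m : nat) (A B : 'I_m -> set X),
    clopen_partition A -> clopen_partition B ->
    exists h : X -> X, self_homeomorphism h /\ (forall i, h @` A i = B i).

From HB Require Import structures.
From mathcomp Require Import all_boot all_order all_algebra.
From mathcomp Require Import all_classical all_reals all_analysis.
Set Implicit Arguments.
Unset Strict Implicit.
Unset Printing Implicit Defensive.
Local Open Scope classical_set_scope.

(* h-homogeneity gives a homeomorphism between the pieces A_i and B_i of two
   clopen partitions (both being homeomorphic to X), and these glue to a
   homeomorphism of X since the pieces are open and pairwise disjoint.
   Conversely, let A be a proper nonempty clopen set.  Partition homogeneity
   applied to A, X \ A shows that A is infinite, so zero-dimensionality and the
   Hausdorff property split A into two nonempty clopen pieces A1, A2.  A second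
   application gives a homeomorphism h of X with h(A2) = X \ A1; the map that is
   the identity on A1 and h on A2 is then a homeomorphism from A onto X. *)

Lemma infinite_set_two_points (T : eqType) (A : set T) :
  infinite_set A -> exists a b, [/\ A a, A b & a != b].
Proof.
move=> infA; have [a Aa] := infinite_setN0 infA.
have [b [Ab /eqP ba]] := infinite_setN0 (infinite_setD infA (finite_set1 a)).
by exists a, b; split; rewrite // eq_sym.
Qed.

Lemma continuous_within_comp (T U V : topologicalType) (A : set T) (B : set U)
    (f : T -> U) (g : U -> V) :
  {within A, continuous f} -> f @` A `<=` B -> {within B, continuous g} ->
  {within A, continuous (g \o f)}.
Proof.
move=> /subspace_continuousP cf fAB /subspace_continuousP cg.
apply/subspace_continuousP => x Ax W /(cg _ (fAB _ (imageP _ Ax))) gW.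
apply: filterS2 (withinT A (nbhs_filter x)) (cf x Ax _ gW) => y Ay /=.
by apply; apply: fAB; exists y.
Qed.

Section clopen_homogeneity.
Variable T : topologicalType.
Implicit Types (A B C : set T) (f g : T -> T).

Definition homeomorphism_on A B f g : Prop :=
  [/\ {within A, continuous f} /\ {within B, continuous g},
      f @` A `<=` B, g @` B `<=` A,
      (forall a, A a -> g (f a) = a) & (forall b, B b -> f (g b) = b)].

Lemma homeomorphism_on_id A : homeomorphism_on A A id id.
Proof.
by split; rewrite ?image_id //; split; apply: continuous_subspaceT => x; exact: cvg_id.
Qed.

Lemma homeomorphism_on_sym A B f g :
  homeomorphism_on A B f g -> homeomorphism_on B A g f.
Proof. by case=> [[cf cg] fAB gBA gf fg]. Qed.

Lemma homeomorphism_on_comp A B C f g f' g' :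
  homeomorphism_on A B f g -> homeomorphism_on B C f' g' ->
  homeomorphism_on A C (f' \o f) (g \o g').
Proof.
case=> [[cf cg] fAB gBA gf fg] [[cf' cg'] fBC gCB gf' fg'].
split; first split.
- exact: continuous_within_comp cf fAB cf'.
- exact: continuous_within_comp cg' gCB cg.
- by move=> _ [x Ax <-]; apply: fBC; exists (f x) => //; apply: fAB; exists x.
- by move=> _ [z Cz <-]; apply: gBA; exists (g' z) => //; apply: gCB; exists z.
- by move=> x Ax /=; rewrite gf' ?gf //; apply: fAB; exists x.
- by move=> z Cz /=; rewrite fg ?fg' //; apply: gCB; exists z.
Qed.

Lemma homeomorphism_on_image A B f g : homeomorphism_on A B f g -> f @` A = B.
Proof.
case=> _ fAB gBA _ fg; apply/seteqP; split => // y By.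
by exists (g y); [apply: gBA; exists y | exact: fg].
Qed.

Lemma self_homeomorphism_on f :
  self_homeomorphism f -> exists g, forall A, homeomorphism_on A (f @` A) f g.
Proof.
case=> g [cf cg fK gK]; exists g => A; split=> //.
- by split; exact: continuous_subspaceT.
by move=> _ [_ [x Ax <-] <-]; rewrite fK.
Qed.

Lemma homeomorphism_onT f g :
  homeomorphism_on [set: T] [set: T] f g -> self_homeomorphism f.
Proof.
case=> [[cf cg] _ _ gf fg]; exists g.
by split=> [||x|y]; [exact/continuous_subspace_setT|exact/continuous_subspace_setT|
  exact: gf|exact: fg].
Qed.

Lemma glue_continuous (I : Type) (A : I -> set T) (phi : I -> T -> T) :
  (forall i, open (A i)) -> trivIset setT A ->
  (forall i, {within A i, continuous phi i}) ->
  exists F, (forall i x, A i x -> F x = phi i x) /\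
            {within \bigcup_i A i, continuous F}.
Proof.
move=> oA tA cphi.
have /choice[F FE] : forall x, exists y, forall i, A i x -> y = phi i x.
  move=> x; have [[i _ Ai]|nA] := pselect ((\bigcup_i A i) x).
    by exists (phi i x) => j Aj; rewrite (tA j i) //; exists x.
  by exists x => i Ai; case: nA; exists i.
exists F; split=> [i x|]; first exact: FE.
rewrite continuous_open_subspace; last exact: bigcup_open.
move=> x /[1!inE] -[i _ Ai].
have := cphi i; rewrite continuous_open_subspace // => /(_ x).
rewrite inE => /(_ Ai) cx; rewrite /continuous_at (FE x i Ai).
apply: cvg_trans cx; apply: near_eq_cvg.
by apply: filterS (open_nbhs_nbhs (conj (oA i) Ai)) => y /FE ->.
Qed.

Lemma homeomorphism_on_bigcup (I : Type) (A B : I -> set T) (f g : I -> T -> T) :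
  (forall i, open (A i)) -> (forall i, open (B i)) ->
  trivIset setT A -> trivIset setT B ->
  (forall i, homeomorphism_on (A i) (B i) (f i) (g i)) ->
  exists F G, homeomorphism_on (\bigcup_i A i) (\bigcup_i B i) F G /\
              forall i, F @` A i = B i.
Proof.
move=> oA oB tA tB hfg.
have [F [FE cF]] : exists F, (forall i x, A i x -> F x = f i x) /\
    {within \bigcup_i A i, continuous F}.
  by apply: glue_continuous => // i; case: (hfg i) => -[].
have [G [GE cG]] : exists G, (forall i y, B i y -> G y = g i y) /\
    {within \bigcup_i B i, continuous G}.
  by apply: glue_continuous => // i; case: (hfg i) => -[].
have FA i : F @` A i = B i.
  by rewrite (eq_imagel (FE i)); exact: homeomorphism_on_image (hfg i).
have GB i : G @` B i = A i.
  by rewrite (eq_imagel (GE i)); exact/homeomorphism_on_image/homeomorphism_on_sym.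
exists F, G; split=> //; split=> //.
- by move=> _ [x [i _ Ai] <-]; exists i => //; rewrite -FA; exists x.
- by move=> _ [y [i _ Bi] <-]; exists i => //; rewrite -GB; exists y.
- move=> x [i _ Ai]; have [_ fAB _ gf _] := hfg i.
  by rewrite (FE i) // (GE i) ?gf //; apply: fAB; exists x.
- move=> y [i _ Bi]; have [_ _ gBA _ fg] := hfg i.
  by rewrite (GE i) // (FE i) ?fg //; apply: gBA; exists y.
Qed.

Lemma clopen_partition_trivIset m (A : 'I_m -> set T) :
  clopen_partition A -> trivIset setT A.
Proof.
by case=> _ _ dA _ i j _ _; case: (eqVneq i j) => // /dA -> [].
Qed.

Lemma h_homogeneous_partition_homogeneous :
  h_homogeneous T -> partition_homogeneous T.
Proof.
move=> hh m A B pA pB.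
have [[cA nA _ _] [cB nB _ _]] := (pA, pB).
have hAB i : exists fg : (T -> T) * (T -> T),
    homeomorphism_on (A i) (B i) fg.1 fg.2.
  have [f [g hA]] := hh _ (cA i) (nA i).
  have [f' [g' hB]] := hh _ (cB i) (nB i).
  exists (g' \o f, g \o f').
  exact: homeomorphism_on_comp hA (homeomorphism_on_sym hB).
have [fg hfg] := choice hAB.
have [F [G [hFG FA]]] := homeomorphism_on_bigcup (fun i => (cA i).1)
  (fun i => (cB i).1) (clopen_partition_trivIset pA)
  (clopen_partition_trivIset pB) hfg.
case: pA pB hFG => [_ _ _ ->] [_ _ _ ->] /homeomorphism_onT hF.
by exists F.
Qed.

Definition proper_clopen A := [/\ clopen A, A !=set0 & ~` A !=set0].

Lemma proper_clopenC A : proper_clopen A -> proper_clopen (~` A).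
Proof. by case=> cA nA nCA; split; rewrite ?setCK //; exact: clopenC. Qed.

Lemma proper_clopen_partition A : proper_clopen A ->
  clopen_partition (fun i : 'I_2 => if i == ord0 then A else ~` A).
Proof.
case=> cA nA nCA; split.
- by move=> i; case: ifP => _ //; exact: clopenC.
- by move=> i; case: ifP.
- by move=> [[|[|i]] ?] // [[|[|j]] ?] //= _; rewrite ?setICr ?setICl.
- apply/seteqP; split => // x _; have [Ax|nAx] := pselect (A x).
    by exists ord0.
  by exists (@Ordinal 2 1 isT).
Qed.

Lemma partition_homogeneous_proper_clopen A B :
  partition_homogeneous T -> proper_clopen A -> proper_clopen B ->
  exists h, self_homeomorphism h /\ h @` A = B.
Proof.
move=> ph pA pB.
have [h [hh /(_ ord0)]] := ph _ _ _ (proper_clopen_partition pA)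
  (proper_clopen_partition pB).
by exists h.
Qed.

Lemma partition_homogeneous_infinite_clopen A :
  partition_homogeneous T -> infinite_set [set: T] -> proper_clopen A ->
  infinite_set A.
Proof.
move=> ph infT pA finA; apply: infT.
have [h [_ hA]] := partition_homogeneous_proper_clopen ph pA (proper_clopenC pA).
by rewrite -(setUv A) -hA finite_setU; split=> //; exact: finite_image.
Qed.

Lemma zero_dim_separation (a b : T) : zero_dim_space T -> hausdorff_space T ->
  a != b -> exists V, [/\ clopen V, V a & ~ V b].
Proof.
move=> zd hs ab; have [U [oU aU bU]] := hausdorff_accessible hs ab.
rewrite inE in aU; rewrite inE /= in bU.
have [V [cV Va VU]] := zd U a oU aU.
by exists V; split=> // /VU.
Qed.

Lemma partition_homogeneous_h_homogeneous :
  infinite_set [set: T] -> zero_dim_space T -> hausdorff_space T ->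
  partition_homogeneous T -> h_homogeneous T.
Proof.
move=> infT zd hs ph A cA nA.
have [->|/setTPn[x nAx]] := eqVneq A setT.
  by exists id, id; exact: homeomorphism_on_id.
have pA : proper_clopen A by split=> //; exists x.
have [a [b [Aa Ab ab]]] := infinite_set_two_points
  (partition_homogeneous_infinite_clopen ph infT pA).
have [V [cV Va nVb]] := zero_dim_separation zd hs ab.
pose A1 := A `&` V; pose A2 := A `&` ~` V.
have cA1 : clopen A1 by exact: clopenI.
have pA2 : proper_clopen A2.
  by split; [exact/clopenI/clopenC | exists b | exists a => -[]].
have pCA1 : proper_clopen (~` A1).
  by split; [exact: clopenC | exists b => -[] | rewrite setCK; exists a].
have [h [hh hA2]] := partition_homogeneous_proper_clopen ph pA2 pCA1.
have [k hk] := self_homeomorphism_on hh.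
pose Af := bigcup2 A1 A2; pose Bf := bigcup2 A1 (~` A1).
have oAf n : open (Af n).
  by case: n => [|[|n]] /=; [exact: cA1.1 | case: pA2 => -[] | exact: open0].
have oBf n : open (Bf n).
  by case: n => [|[|n]] /=; [exact: cA1.1 | case: pCA1 => -[] | exact: open0].
have tAf : trivIset setT Af by rewrite -trivIset_bigcup2 setIACA setICr setI0.
have tBf : trivIset setT Bf by rewrite -trivIset_bigcup2 setICr.
have hAB n : homeomorphism_on (Af n) (Bf n)
    (if n == 1%N then h else id) (if n == 1%N then k else id).
  rewrite /Af /Bf; case: n => [|[|n]] /=; try exact: homeomorphism_on_id.
  by rewrite -hA2; exact: hk.
have [F [G [hFG _]]] := homeomorphism_on_bigcup oAf oBf tAf tBf hAB.
rewrite /Af /Bf !bigcup2E -setIUr setUv setIT (setUv A1) in hFG.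
by exists F, G.
Qed.

End clopen_homogeneity.

Theorem proposition2p2 (X : topologicalType) :
  ~ finite_set [set: X] -> zero_dim_space X -> compact [set: X] ->
  hausdorff_space X ->
  (h_homogeneous X <-> partition_homogeneous X).
Proof.
move=> infX zd _ hs; split; first exact: h_homogeneous_partition_homogeneous.
exact: partition_homogeneous_h_homogeneous.
Qed.
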